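(* Let $(\mathcal{S},\mathcal{R})$ be a homogeneous positive presentation, and let $\kappa$ be the cardinality of $\mathcal{S}$. Then every $r$-completing sequence starting from $(\mathcal{S},\mathcal{R})$ has length less than $\sup(\kappa^+,\aleph_1)$; every presentation occurring in such a sequence defines the same congruence on $\mathcal{S}^*$ (hence the same monoid and group) as $(\mathcal{S},\mathcal{R})$; and every $r$-completing sequence starting from $(\mathcal{S},\mathcal{R})$ that cannot be extended to a longer $r$-completing sequence ends with an $r$-complete presentation equivalent to $(\mathcal{S},\mathcal{R})$.
   Context: A positive presentation is a pair $(\mathcal{S},\mathcal{R})$ where $\mathcal{S}$ is a nonempty set of letters and $\mathcal{R}$ is a family of relations $u=v$, i.e. unordered pairs $\{u,v\}$ of nonempty words in the free monoid $\mathcal{S}^*$. $\varepsilon$ denotes the empty word; $\equiv^{\mathcal{R}}$ is the smallest congruence on $\mathcal{S}^*$ containing all pairs of $\mathcal{R}$. Let $\mathcal{S}^{-1}=\{s^{-1}:s\in\mathcal{S}\}$ be a disjoint copy of $\mathcal{S}$; for $u\in\mathcal{S}^*$, $u^{-1}$ is obtained by reversing the order of the letters of $u$ and replacing each $s$ by $s^{-1}$. Right reversing relative to $\mathcal{R}$: for words $\mathbf{w},\mathbf{w}'$ on $\mathcal{S}\cup\mathcal{S}^{-1}$ we write $\mathbf{w}\curvearrowright_r^{\mathcal{R}}\mathbf{w}'$ if $\mathbf{w}'$ is obtained from $\mathbf{w}$ by a finite (possibly empty) sequence of steps, each of which either deletes a subword $u^{-1}u$ with $u\in\mathcal{S}^*$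 nonempty, or replaces a subword $u^{-1}v$ with $u,v\in\mathcal{S}^*$ nonempty by a word $v'u'^{-1}$ with $u',v'\in\mathcal{S}^*$ such that $uv'=vu'$ is a relation of $\mathcal{R}$. $(\mathcal{S},\mathcal{R})$ is $r$-complete if for all $u,v,u',v'\in\mathcal{S}^*$ with $uv'\equiv^{\mathcal{R}} vu'$ there exist $u'',v'',w\in\mathcal{S}^*$ with $u^{-1}v\curvearrowright_r^{\mathcal{R}} v''u''^{-1}$, $u'\equiv^{\mathcal{R}} u''w$ and $v'\equiv^{\mathcal{R}} v''w$. $(\mathcal{S},\mathcal{R})$ is homogeneous if there exist maps $\lambda,\mu$ from $\mathcal{S}^*$ to the ordinals, both constant on $\equiv^{\mathcal{R}}$-classes, with $\lambda(su)>\lambda(u)$ and $\mu(us)>\mu(u)$ for all $s\in\mathcal{S}$, $u\in\mathcal{S}^*$. A presentation $(\mathcal{S},\mathcal{R}')$ is a $1$-completion of $(\mathcal{S},\mathcal{R})$ if there exist letters $s,t,r\in\mathcal{S}$ and words $u,v\in\mathcal{S}^*$ with $\mathcal{R}'=\mathcal{R}\cup\{sv=tu\}$, $s^{-1}rr^{-1}t\curvearrowright_r^{\mathcal{R}}vu^{-1}$, but not $v^{-1}s^{-1}tu\curvearrowright_r^{\mathcal{R}}\varepsilon$. An $r$-completing sequence starting from $(\mathcal{S},\mathcal{R})$ is a sequence $(\mathcal{S},\mathcal{R}_\xi)_{\xi<\theta}$ indexed by an ordinal $\theta$ with $\mathcal{R}_0=\mathcal{R}$, such that $(\mathcal{S},\mathcal{R}_{\xi+1})$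 is a $1$-completion of $(\mathcal{S},\mathcal{R}_\xi)$ whenever $\xi+1<\theta$, and $\mathcal{R}_\xi=\bigcup_{\eta<\xi}\mathcal{R}_\eta$ for limit $\xi<\theta$. *)

From Stdlib Require Import List Relations.
Import ListNotations.
Set Implicit Arguments.

Section Presentations.
Variable S : Type.

Definition word := list S.
(* signed letters: inl s = s, inr s = s^{-1} *)
Definition sword := list (S + S).
Definition pos (u : word) : sword := map (@inl S S) u.
Definition inv (u : word) : sword := rev (map (@inr S S) u).

(* A family of relations: R u v means the relation u = v is in the family.
   Relations are unordered pairs, so "u = v is a relation of R" is [urel R u v]. *)
Definition rels := word -> word -> Prop.
Definition urel (R : rels) (u v : word) : Prop := R u v \/ R v u.
Definition same_rels (R R' : rels) : Prop := forall u v, urel R u v <-> urel R' u v.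

Definition positive (R : rels) : Prop := forall u v, R u v -> u <> [] /\ v <> [].

Definition is_congruence (E : word -> word -> Prop) : Prop :=
  equivalence word E /\
  (forall a b u v, E u v -> E (a ++ u ++ b) (a ++ v ++ b)).
Definition cong (R : rels) (x y : word) : Prop :=
  forall E, is_congruence E -> (forall u v, R u v -> E u v) -> E x y.

Inductive rev_step (R : rels) : sword -> sword -> Prop :=
| rs_del : forall a b u, u <> [] ->
    rev_step R (a ++ inv u ++ pos u ++ b) (a ++ b)
| rs_rel : forall a b u v u' v', u <> [] -> v <> [] ->
    urel R (u ++ v') (v ++ u') ->
    rev_step R (a ++ inv u ++ pos v ++ b) (a ++ pos v' ++ inv u' ++ b).
Definition reverses (R : rels) : sword -> sword -> Prop :=
  clos_refl_trans sword (rev_step R).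

Definition r_complete (R : rels) : Prop :=
  forall u v u' v', cong R (u ++ v') (v ++ u') ->
    exists u'' v'' w, reverses R (inv u ++ pos v) (pos v'' ++ inv u'') /\
      cong R u' (u'' ++ w) /\ cong R v' (v'' ++ w).

(* strict well-orders: an ordinal-indexed family is modelled by a type
   carrying a well-order (the type of ordinals below the index ordinal) *)
Definition is_wellorder (W : Type) (lt : W -> W -> Prop) : Prop :=
  well_founded lt /\ (forall x y z, lt x y -> lt y z -> lt x z) /\
  (forall x y, lt x y \/ x = y \/ lt y x).

Definition homogeneous (R : rels) : Prop :=
  exists (W : Type) (lt : W -> W -> Prop) (lam mu : word -> W),
    is_wellorder lt /\
    (forall u v, cong R u v -> lam u = lam v) /\
    (forall u v, cong R u v -> mu u = mu v) /\
    (forall s u, lt (lam u) (lam (s :: u))) /\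
    (forall s u, lt (mu u) (mu (u ++ [s]))).

Definition one_completion (R R' : rels) : Prop :=
  exists (s t r : S) (u v : word),
    same_rels R' (fun x y => R x y \/ (x = s :: v /\ y = t :: u)) /\
    reverses R (inv [s] ++ pos [r] ++ inv [r] ++ pos [t]) (pos v ++ inv u) /\
    ~ reverses R (inv v ++ inv [s] ++ pos [t] ++ pos u) [].

Definition is_succ (I : Type) (lt : I -> I -> Prop) (i j : I) : Prop :=
  lt i j /\ forall k, ~ (lt i k /\ lt k j).
Definition is_limit (I : Type) (lt : I -> I -> Prop) (i : I) : Prop :=
  (exists j, lt j i) /\ ~ (exists j, is_succ lt j i).

Definition r_completing_seq (R : rels) (I : Type) (lt : I -> I -> Prop)
  (Rs : I -> rels) : Prop :=
  is_wellorder lt /\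
  (forall i, (forall j, ~ lt j i) -> same_rels (Rs i) R) /\
  (forall i j, is_succ lt i j -> one_completion (Rs i) (Rs j)) /\
  (forall i, is_limit lt i ->
     forall x y, urel (Rs i) x y <-> exists j, lt j i /\ urel (Rs j) x y).

(* the sequence can be extended to a longer r-completing sequence: it is
   (isomorphic to) a proper initial segment of another one *)
Definition extendable (R : rels) (I : Type) (lt : I -> I -> Prop)
  (Rs : I -> rels) : Prop :=
  exists (J : Type) (ltJ : J -> J -> Prop) (Rs' : J -> rels) (f : I -> J),
    r_completing_seq R ltJ Rs' /\
    (forall a b, lt a b <-> ltJ (f a) (f b)) /\
    (forall j a, ltJ j (f a) -> exists b, f b = j) /\
    (exists j, forall a, f a <> j) /\
    (forall a, same_rels (Rs' (f a)) (Rs a)).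

End Presentations.

(* A 1-completion adds a relation [s v = t u] that already holds in the monoid,
   since reversing [s^-1 r r^-1 t] to [v u^-1] proves it; so the congruence
   never changes along an r-completing sequence.  The added relation is new at
   each step, so the steps are indexed injectively by pairs of words, of which
   there are at most max(|S|, aleph_0) (for infinite [S] this is |S x S| = |S|,
   proved with Zorn's lemma).  A sequence that cannot be extended has a last
   term admitting no 1-completion, i.e. satisfying the cube condition on
   letters, and by homogeneity (induction on lambda, then on word lengths) the
   cube condition on letters implies r-completeness. *)

From Stdlib Require Import List Relations Classical ClassicalEpsilon Cantor Lia PeanoNat Wf_nat.
From mathcomp Require classical_sets.
Import ListNotations.
Set Implicit Arguments.

Section Congruence.
Variable S : Type.
Implicit Types (R : rels S) (x y u v : word S).

Lemma cong_refl R x : cong R x x.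
Proof. intros E [[Hrefl _ _] _] _. apply Hrefl. Qed.

Lemma cong_sym R x y : cong R x y -> cong R y x.
Proof. intros H E HE HR. pose proof HE as [[_ _ Hsym] _]. apply Hsym, H; auto. Qed.

Lemma cong_trans R x y z : cong R x y -> cong R y z -> cong R x z.
Proof.
  intros H1 H2 E HE HR. pose proof HE as [[_ Htrans _] _].
  apply Htrans with y; [apply H1 | apply H2]; auto.
Qed.

Lemma cong_ctx R a b x y : cong R x y -> cong R (a ++ x ++ b) (a ++ y ++ b).
Proof. intros H E HE HR. pose proof HE as [_ Hctx]. apply Hctx, H; auto. Qed.

Lemma cong_rel R x y : R x y -> cong R x y.
Proof. intros H E _ HR. auto. Qed.

Lemma urel_sym R x y : urel R x y -> urel R y x.
Proof. intros [H|H]; [right|left]; exact H. Qed.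

Lemma cong_urel R x y : urel R x y -> cong R x y.
Proof. intros [H|H]; [apply cong_rel | apply cong_sym, cong_rel]; exact H. Qed.

Lemma cong_is_congruence R : is_congruence (cong R).
Proof.
  split; [split|].
  - intros x; apply cong_refl.
  - intros x y z; apply cong_trans.
  - intros x y; apply cong_sym.
  - intros a b x y; apply cong_ctx.
Qed.

Lemma cong_min R1 R2 :
  (forall x y, R1 x y -> cong R2 x y) -> forall x y, cong R1 x y -> cong R2 x y.
Proof. intros H x y Hxy. apply Hxy; [apply cong_is_congruence | exact H]. Qed.

Lemma cong_same_rels R1 R2 : same_rels R1 R2 -> forall x y, cong R1 x y <-> cong R2 x y.
Proof.
  intros H x y; split; apply cong_min; intros a b Hab; apply cong_urel, H; left; exact Hab.
Qed.

Lemma cong_appl R a y y' : cong R y y' -> cong R (a ++ y) (a ++ y').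
Proof. intros H. pose proof (cong_ctx a [] H) as Hc. rewrite !app_nil_r in Hc. exact Hc. Qed.

Lemma cong_appr R x x' b : cong R x x' -> cong R (x ++ b) (x' ++ b).
Proof. exact (@cong_ctx R [] b x x'). Qed.

Definition rewrite_step R x y :=
  exists a b l r, urel R l r /\ x = a ++ l ++ b /\ y = a ++ r ++ b.

Lemma cong_rewriteE R x y : cong R x y <-> clos_refl_trans _ (rewrite_step R) x y.
Proof.
  split.
  - intros H. apply H.
    + split; [split|].
      * intros z; apply rt_refl.
      * intros a b c; apply rt_trans.
      * intros a b Hab. induction Hab as [a b (p&q&l&r&Hu&->&->)| |]; eauto using rt_trans, rt_refl.
        apply rt_step. exists p, q, r, l. auto using urel_sym.
      * intros a b u v Huv.
        induction Huv as [u v (p&q&l&r&Hu&->&->)| |]; eauto using rt_trans, rt_refl.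
        apply rt_step. exists (a ++ p), (q ++ b), l, r. rewrite <- !app_assoc. auto.
    + intros u v Huv. apply rt_step. exists [], [], u, v. rewrite !app_nil_r. split; [left|]; auto.
  - induction 1 as [x y (a&b&l&r&Hu&->&->)| |]; eauto using cong_trans, cong_refl.
    apply cong_ctx, cong_urel, Hu.
Qed.

End Congruence.

Section Reversing.
Variable S : Type.
Variable R : rels S.
Implicit Types (x y u v : word S) (w : sword S).

Lemma pos_app x y : pos (x ++ y) = pos x ++ pos y.
Proof. apply map_app. Qed.

Lemma inv_app x y : inv (x ++ y) = inv y ++ inv x.
Proof. unfold inv. rewrite map_app, rev_app_distr. reflexivity. Qed.

Lemma inv_cons s x : inv (s :: x) = inv x ++ [inr s].
Proof. reflexivity. Qed.

Lemma inv_snoc s x : inv (x ++ [s]) = inr s :: inv x.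
Proof. rewrite inv_app. reflexivity. Qed.

Lemma rev_step_ctx a b w w' : rev_step R w w' -> rev_step R (a ++ w ++ b) (a ++ w' ++ b).
Proof.
  intros [a0 b0 u Hu | a0 b0 u v u' v' Hu Hv Hr].
  - replace (a ++ (a0 ++ inv u ++ pos u ++ b0) ++ b)
      with ((a ++ a0) ++ inv u ++ pos u ++ (b0 ++ b)) by (rewrite <- !app_assoc; reflexivity).
    replace (a ++ (a0 ++ b0) ++ b) with ((a ++ a0) ++ (b0 ++ b))
      by (rewrite <- !app_assoc; reflexivity).
    constructor; exact Hu.
  - replace (a ++ (a0 ++ inv u ++ pos v ++ b0) ++ b)
      with ((a ++ a0) ++ inv u ++ pos v ++ (b0 ++ b)) by (rewrite <- !app_assoc; reflexivity).
    replace (a ++ (a0 ++ pos v' ++ inv u' ++ b0) ++ b)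
      with ((a ++ a0) ++ pos v' ++ inv u' ++ (b0 ++ b)) by (rewrite <- !app_assoc; reflexivity).
    constructor; assumption.
Qed.

Lemma reverses_ctx a b w w' : reverses R w w' -> reverses R (a ++ w ++ b) (a ++ w' ++ b).
Proof.
  induction 1; [apply rt_step, rev_step_ctx; assumption | apply rt_refl | eapply rt_trans; eauto].
Qed.

Lemma reverses_prefix a w w' : reverses R w w' -> reverses R (a ++ w) (a ++ w').
Proof. intros H. pose proof (reverses_ctx a [] H) as Hc. rewrite !app_nil_r in Hc. exact Hc. Qed.

Lemma reverses_suffix b w w' : reverses R w w' -> reverses R (w ++ b) (w' ++ b).
Proof. exact (@reverses_ctx [] b w w'). Qed.

(* [diagram u v v' u']: a reversing diagram with top edge [v], left edge [u],
   bottom edge [v'] and right edge [u'], built from elementary cells by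
   horizontal and vertical composition; it witnesses that [inv u ++ pos v]
   reverses to [pos v' ++ inv u'] (and conversely, see [reverses_diagram]). *)
Inductive diagram : word S -> word S -> word S -> word S -> Prop :=
| diagram_nil_l v : diagram [] v v []
| diagram_nil_r u : diagram u [] [] u
| diagram_cancel s : diagram [s] [s] [] []
| diagram_rel s t x y : urel R (s :: x) (t :: y) -> diagram [s] [t] x y
| diagram_hcat u v1 v2 v1' v2' u1 u2 :
    diagram u v1 v1' u1 -> diagram u1 v2 v2' u2 -> diagram u (v1 ++ v2) (v1' ++ v2') u2
| diagram_vcat u1 u2 v v1 v2 u1' u2' :
    diagram u1 v v1 u1' -> diagram u2 v1 v2 u2' -> diagram (u1 ++ u2) v v2 (u1' ++ u2').

Lemma diagram_reverses u v v' u' :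
  diagram u v v' u' -> reverses R (inv u ++ pos v) (pos v' ++ inv u').
Proof.
  induction 1 as [v|u|s|s t x y Hr|u v1 v2 v1' v2' u1 u2 _ IH1 _ IH2
                 |u1 u2 v v1 v2 u1' u2' _ IH1 _ IH2].
  - rewrite app_nil_r. apply rt_refl.
  - rewrite app_nil_r. apply rt_refl.
  - apply rt_step. exact (@rs_del S R [] [] [s] ltac:(discriminate)).
  - apply rt_step. pose proof (@rs_rel S R [] [] [s] [t] y x) as Hs.
    simpl in Hs. rewrite !app_nil_r in Hs. apply Hs; [discriminate | discriminate | exact Hr].
  - rewrite !pos_app, app_assoc. apply rt_trans with (pos v1' ++ inv u1 ++ pos v2).
    + rewrite app_assoc. apply reverses_suffix, IH1.
    + rewrite <- app_assoc. apply reverses_prefix, IH2.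
  - rewrite !inv_app, <- app_assoc. apply rt_trans with (inv u2 ++ pos v1 ++ inv u1').
    + apply reverses_prefix, IH1.
    + rewrite !app_assoc. apply reverses_suffix, IH2.
Qed.

Lemma diagram_cong u v v' u' : diagram u v v' u' -> cong R (u ++ v') (v ++ u').
Proof.
  induction 1 as [v|u|s|s t x y Hr|u v1 v2 v1' v2' u1 u2 _ IH1 _ IH2
                 |u1 u2 v v1 v2 u1' u2' _ IH1 _ IH2]; simpl; rewrite ?app_nil_r.
  - apply cong_refl.
  - apply cong_refl.
  - apply cong_refl.
  - apply cong_urel, Hr.
  - apply cong_trans with (v1 ++ u1 ++ v2').
    + rewrite (app_assoc u), (app_assoc v1). apply cong_appr, IH1.
    + rewrite <- app_assoc. apply cong_appl, IH2.
  - apply cong_trans with (u1 ++ v1 ++ u2').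
    + rewrite <- app_assoc. apply cong_appl, IH2.
    + rewrite (app_assoc u1), (app_assoc v). apply cong_appr, IH1.
Qed.

Lemma diagram_split_left u v v' u' : diagram u v v' u' -> forall a b, u = a ++ b ->
  exists v1 u1 u2, diagram a v v1 u1 /\ diagram b v1 v' u2 /\ u' = u1 ++ u2.
Proof.
  induction 1 as [v|u|s|s t x y Hr|u v1 v2 v1' v2' u1 u2 Hd1 IH1 Hd2 IH2
                 |u1 u2 v v1 v2 u1' u2' Hd1 IH1 Hd2 IH2]; intros a b Hab.
  - symmetry in Hab; apply app_eq_nil in Hab as [-> ->].
    exists v, [], []. repeat split; constructor.
  - subst. exists [], a, b. repeat split; constructor.
  - destruct a as [|a0 a]; simpl in Hab.
    + subst. exists [s], [], []. repeat split; constructor.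
    + injection Hab as -> Hab. symmetry in Hab; apply app_eq_nil in Hab as [-> ->].
      exists [], [], []. repeat split; constructor.
  - destruct a as [|a0 a]; simpl in Hab.
    + subst. exists [t], [], y. repeat split; [constructor | constructor; exact Hr].
    + injection Hab as -> Hab. symmetry in Hab; apply app_eq_nil in Hab as [-> ->].
      exists x, y, []. rewrite app_nil_r. repeat split; [constructor; exact Hr | constructor].
  - destruct (IH1 a b Hab) as (p&q&q'&Ha&Hb&->).
    destruct (IH2 q q' eq_refl) as (m&n&n'&Hq&Hq'&->).
    exists (p ++ m), n, n'. repeat split; eapply diagram_hcat; eauto.
  - apply app_eq_app in Hab as [l [[Hl1 Hl2]|[Hl1 Hl2]]].
    + destruct (IH1 a l Hl1) as (p&q&q'&Ha&Hl&->).
      exists p, q, (q' ++ u2'). rewrite <- app_assoc. subst b.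
      repeat split; [exact Ha | eapply diagram_vcat; eauto].
    + destruct (IH2 l b Hl2) as (p&q&q'&Hl&Hb&->).
      exists p, (u1' ++ q), q'. rewrite <- app_assoc. subst a.
      repeat split; [eapply diagram_vcat; eauto | exact Hb].
Qed.

Lemma diagram_split_top u v v' u' : diagram u v v' u' -> forall a b, v = a ++ b ->
  exists u1 v1 v2, diagram u a v1 u1 /\ diagram u1 b v2 u' /\ v' = v1 ++ v2.
Proof.
  induction 1 as [v|u|s|s t x y Hr|u v1 v2 v1' v2' u1 u2 Hd1 IH1 Hd2 IH2
                 |u1 u2 v v1 v2 u1' u2' Hd1 IH1 Hd2 IH2]; intros a b Hab.
  - subst. exists [], a, b. repeat split; constructor.
  - symmetry in Hab; apply app_eq_nil in Hab as [-> ->].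
    exists u, [], []. repeat split; constructor.
  - destruct a as [|a0 a]; simpl in Hab.
    + subst. exists [s], [], []. repeat split; constructor.
    + injection Hab as -> Hab. symmetry in Hab; apply app_eq_nil in Hab as [-> ->].
      exists [], [], []. repeat split; constructor.
  - destruct a as [|a0 a]; simpl in Hab.
    + subst. exists [s], [], x. repeat split; [constructor | constructor; exact Hr].
    + injection Hab as -> Hab. symmetry in Hab; apply app_eq_nil in Hab as [-> ->].
      exists y, x, []. rewrite app_nil_r. repeat split; [constructor; exact Hr | constructor].
  - apply app_eq_app in Hab as [l [[Hl1 Hl2]|[Hl1 Hl2]]].
    + destruct (IH1 a l Hl1) as (p&q&q'&Ha&Hl&->).
      exists p, q, (q' ++ v2'). rewrite <- app_assoc. subst b.
      repeat split; [exact Ha | eapply diagram_hcat; eauto].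
    + destruct (IH2 l b Hl2) as (p&q&q'&Hl&Hb&->).
      exists p, (v1' ++ q), q'. rewrite <- app_assoc. subst a.
      repeat split; [eapply diagram_hcat; eauto | exact Hb].
  - destruct (IH1 a b Hab) as (p&q&q'&Ha&Hb&->).
    destruct (IH2 q q' eq_refl) as (m&n&n'&Hq&Hq'&->).
    exists (p ++ m), n, n'. repeat split; eapply diagram_vcat; eauto.
Qed.

Lemma diagram_refl u : diagram u u [] [].
Proof.
  induction u as [|s u IH]; [constructor|].
  exact (diagram_vcat (diagram_hcat (diagram_cancel s) (diagram_nil_l u)) IH).
Qed.

Lemma diagram_prefix_left p q : diagram (p ++ q) p [] q.
Proof. exact (diagram_vcat (diagram_refl p) (diagram_nil_r q)). Qed.

Lemma diagram_prefix_top p q : diagram p (p ++ q) q [].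
Proof. exact (diagram_hcat (diagram_refl p) (diagram_nil_l q)). Qed.

Lemma diagram_of_urel x y x' y' :
  x <> [] -> y <> [] -> urel R (x ++ y') (y ++ x') -> diagram x y y' x'.
Proof.
  intros Hx Hy Hr. destruct x as [|s x0]; [congruence|]. destruct y as [|t y0]; [congruence|].
  assert (Hcell : diagram [s] [t] (x0 ++ y') (y0 ++ x')) by (constructor; exact Hr).
  pose proof (diagram_hcat Hcell (diagram_prefix_left y0 x')) as Hrow. rewrite app_nil_r in Hrow.
  pose proof (diagram_vcat Hrow (diagram_prefix_top x0 y')) as Hd. rewrite app_nil_r in Hd.
  exact Hd.
Qed.

Lemma diagram_nil_l_inv v v' u' : diagram [] v v' u' -> v' = v /\ u' = [].
Proof.
  intros H. remember [] as e eqn:He. revert He.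
  induction H as [| | | |u v1 v2 v1' v2' u1 u2 _ IH1 _ IH2|u1 u2 v v1 v2 u1' u2' _ IH1 _ IH2];
    intros He; try discriminate; auto.
  - subst. destruct (IH1 eq_refl) as [-> ->]. destruct (IH2 eq_refl) as [-> ->]. auto.
  - apply app_eq_nil in He as [-> ->].
    destruct (IH1 eq_refl) as [-> ->]. destruct (IH2 eq_refl) as [-> ->]. auto.
Qed.

(* [rev_nf w v u]: [w] reverses to [pos v ++ inv u], the letters of [w] being
   absorbed from right to left.  Unlike [reverses], this relation is stable
   under inverse reversing steps ([rev_nf_step]). *)
Inductive rev_nf : sword S -> word S -> word S -> Prop :=
| rev_nf_nil : rev_nf [] [] []
| rev_nf_pos_cons s w v u : rev_nf w v u -> rev_nf (inl s :: w) (s :: v) u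
| rev_nf_inv_cons s w v u v' u' :
    rev_nf w v u -> diagram [s] v v' u' -> rev_nf (inr s :: w) v' (u ++ u').

Lemma rev_nf_pos z : rev_nf (pos z) z [].
Proof. induction z; constructor; assumption. Qed.

Lemma rev_nf_pos_inv z v u : rev_nf (pos z) v u -> v = z /\ u = [].
Proof.
  revert v u; induction z as [|s z IH]; intros v u H; inversion H; subst; auto.
  destruct (IH _ _ H4) as [-> ->]. auto.
Qed.

Lemma rev_nf_pos_app x w v u : rev_nf w v u -> rev_nf (pos x ++ w) (x ++ v) u.
Proof. induction x; simpl; [auto | constructor; auto]. Qed.

Lemma rev_nf_pos_app_inv x w v u :
  rev_nf (pos x ++ w) v u -> exists v2, v = x ++ v2 /\ rev_nf w v2 u.
Proof.
  revert v; induction x as [|s x IH]; simpl; intros v H; [eauto|].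
  inversion H; subst. destruct (IH _ H4) as (v2&->&Hw). eauto.
Qed.

Lemma rev_nf_app a c v u : rev_nf (a ++ c) v u <->
  exists v1 u1 u2, rev_nf c v1 u1 /\ rev_nf (a ++ pos v1) v u2 /\ u = u1 ++ u2.
Proof.
  revert v u; induction a as [|[s|s] a IH]; intros v u; simpl; split.
  - intros H. exists v, u, []. rewrite app_nil_r.
    split; [exact H | split; [apply rev_nf_pos | auto]].
  - intros (v1&u1&u2&H1&H2&->). apply rev_nf_pos_inv in H2 as [-> ->]. rewrite app_nil_r. exact H1.
  - intros H; inversion H; subst. apply IH in H4 as (v1&u1&u2&H1&H2&->).
    exists v1, u1, u2. repeat split; [exact H1 | constructor; exact H2].
  - intros (v1&u1&u2&H1&H2&->). inversion H2; subst. constructor. apply IH. eauto 6.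
  - intros H; inversion H; subst. apply IH in H2 as (v1&u1&u2&H1&H2&->).
    exists v1, u1, (u2 ++ u'). rewrite app_assoc.
    repeat split; [exact H1 | econstructor; eauto].
  - intros (v1&u1&u2&H1&H2&->). inversion H2; subst. rewrite app_assoc.
    econstructor; [apply IH; eauto 6 | eassumption].
Qed.

Lemma rev_nf_diagram x z v u : rev_nf (inv x ++ pos z) v u <-> diagram x z v u.
Proof.
  revert z v u; induction x as [|s x IH] using rev_ind; intros z v u; split; intros H.
  - apply rev_nf_pos_inv in H as [-> ->]. constructor.
  - apply diagram_nil_l_inv in H as [-> ->]. apply rev_nf_pos.
  - rewrite inv_snoc in H. inversion H; subst. eapply diagram_vcat; [apply IH|]; eassumption.
  - destruct (diagram_split_left H x [s] eq_refl) as (v1&u1&u2&H1&H2&->).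
    rewrite inv_snoc. econstructor; [apply IH|]; eassumption.
Qed.

Lemma rev_nf_inv u : rev_nf (inv u) [] u.
Proof.
  induction u as [|s u IH] using rev_ind; [constructor|].
  rewrite inv_snoc. econstructor; [exact IH | constructor].
Qed.

Lemma rev_nf_pos_inv_nf v u : rev_nf (pos v ++ inv u) v u.
Proof. rewrite <- (app_nil_r v) at 2. apply rev_nf_pos_app, rev_nf_inv. Qed.

Lemma rev_nf_step w w1 v u : rev_step R w w1 -> rev_nf w1 v u -> rev_nf w v u.
Proof.
  intros [a b x Hx | a b x y x' y' Hx Hy Hr] H;
    apply rev_nf_app in H as (v1&u1&u2&H1&H2&->); apply rev_nf_app.
  - exists v1, u1, u2. repeat split; [|exact H2].
    apply rev_nf_app. exists (x ++ v1), u1, []. rewrite app_nil_r.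
    repeat split; [apply rev_nf_pos_app, H1 | apply rev_nf_diagram, diagram_prefix_top].
  - apply rev_nf_pos_app_inv in H1 as (v3&->&H1).
    apply rev_nf_app in H1 as (v4&u4&u5&H4&H5&->).
    apply rev_nf_diagram in H5.
    exists (y' ++ v3), (u4 ++ u5), u2. repeat split; [|exact H2].
    rewrite app_assoc. apply rev_nf_app. exists v4, u4, u5. repeat split; [exact H4|].
    rewrite <- app_assoc, <- pos_app. apply rev_nf_diagram.
    eapply diagram_hcat; [apply diagram_of_urel; eassumption | exact H5].
Qed.

Lemma rev_nf_reverses w w' v u : reverses R w w' -> rev_nf w' v u -> rev_nf w v u.
Proof. induction 1; eauto using rev_nf_step. Qed.

Lemma reverses_diagram x z v u :
  reverses R (inv x ++ pos z) (pos v ++ inv u) -> diagram x z v u.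
Proof. intros H. apply rev_nf_diagram. exact (rev_nf_reverses H (rev_nf_pos_inv_nf v u)). Qed.

Lemma completion_rel_cong s r t v u :
  reverses R (inv [s] ++ pos [r] ++ inv [r] ++ pos [t]) (pos v ++ inv u) ->
  cong R (s :: v) (t :: u).
Proof.
  intros H. pose proof (rev_nf_reverses H (rev_nf_pos_inv_nf v u)) as Hnf.
  rewrite app_assoc in Hnf. apply rev_nf_app in Hnf as (v1&u1&u2&Hrt&Hsr&->).
  apply rev_nf_diagram, diagram_cong in Hrt.
  rewrite <- app_assoc, <- pos_app in Hsr. apply rev_nf_diagram, diagram_cong in Hsr.
  apply cong_trans with (r :: v1 ++ u2); [exact Hsr|].
  exact (cong_appr u2 Hrt).
Qed.

End Reversing.

Section Completeness.
Variable S : Type.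
Variable R : rels S.
Implicit Types (x y u v w : word S).

(* The common multiple [u v' = v u'] factors through the right reversing of
   [inv u ++ pos v]. *)
Definition factors u v u' v' :=
  exists v'' u'' w, diagram R u v v'' u'' /\ cong R u' (u'' ++ w) /\ cong R v' (v'' ++ w).

Lemma factors_hcat u v1 v2 u' v' va ua wa :
  diagram R u v1 va ua -> cong R v' (va ++ wa) -> factors ua v2 u' wa ->
  factors u (v1 ++ v2) u' v'.
Proof.
  intros Ha Hv (vb&ub&wb&Hb&Hu'&Hwa). exists (va ++ vb), ub, wb.
  repeat split; [exact (diagram_hcat Ha Hb) | exact Hu' |].
  rewrite <- app_assoc. exact (cong_trans Hv (cong_appl va Hwa)).
Qed.

Lemma factors_vcat u1 u2 v u' v' va ua wa :
  diagram R u1 v va ua -> cong R u' (ua ++ wa) -> factors u2 va wa v' ->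
  factors (u1 ++ u2) v u' v'.
Proof.
  intros Ha Hu (vb&ub&wb&Hb&Hwa&Hv'). exists vb, (ua ++ ub), wb.
  repeat split; [exact (diagram_vcat Ha Hb) | | exact Hv'].
  rewrite <- app_assoc. exact (cong_trans Hu (cong_appl ua Hwa)).
Qed.

Lemma diagram_cons_factors s t x y : diagram R (s :: x) (t :: y) [] [] -> factors [s] [t] y x.
Proof.
  intros Hd.
  destruct (diagram_split_left Hd [s] x eq_refl) as (p&q&q'&Hs&Hx&Hq).
  symmetry in Hq; apply app_eq_nil in Hq as [-> ->].
  destruct (diagram_split_top Hs [t] y eq_refl) as (q1&p1&p2&Hst&Hy&->).
  destruct (diagram_split_top Hx p1 p2 eq_refl) as (c&m1&m2&Hx1&Hx2&Hm).
  symmetry in Hm; apply app_eq_nil in Hm as [-> ->].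
  apply diagram_cong in Hx1, Hx2, Hy.
  rewrite !app_nil_r in Hx1; rewrite !app_nil_r in Hx2; rewrite !app_nil_r in Hy.
  exists p1, q1, p2. repeat split; [exact Hst | apply cong_sym, Hy |].
  exact (cong_trans Hx1 (cong_appl p1 Hx2)).
Qed.

Variable W : Type.
Variable ltW : W -> W -> Prop.
Variable lam : word S -> W.
Hypothesis ltW_wf : well_founded ltW.
Hypothesis ltW_trans : forall a b c, ltW a b -> ltW b c -> ltW a c.
Hypothesis lam_cong : forall u v, cong R u v -> lam u = lam v.
Hypothesis lam_cons : forall s u, ltW (lam u) (lam (s :: u)).
(* The cube condition on letters; it holds when [R] admits no 1-completion. *)
Hypothesis cube : forall s r t u v,
  reverses R (inv [s] ++ pos [r] ++ inv [r] ++ pos [t]) (pos v ++ inv u) ->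
  reverses R (inv v ++ inv [s] ++ pos [t] ++ pos u) [].

Lemma ltW_irrefl a : ~ ltW a a.
Proof. induction (ltW_wf a) as [a _ IH]. intros H. exact (IH a H H). Qed.

Lemma lam_nil_lt s u : ltW (lam []) (lam (s :: u)).
Proof.
  revert s; induction u as [|s' u IH]; intros s; [apply lam_cons|].
  exact (ltW_trans (IH s') (lam_cons s (s' :: u))).
Qed.

Lemma cong_nil u : cong R [] u -> u = [].
Proof.
  intros H. destruct u as [|s u]; [reflexivity|]. exfalso.
  pose proof (lam_nil_lt s u) as Hlt. rewrite (lam_cong H) in Hlt. exact (ltW_irrefl Hlt).
Qed.

Lemma factors_app_cong u v u' v' w u2 v2 :
  factors u v u' v' -> cong R (u' ++ w) u2 -> cong R (v' ++ w) v2 -> factors u v u2 v2.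
Proof.
  intros (v''&u''&w''&Hd&Hu&Hv) Hu2 Hv2. exists v'', u'', (w'' ++ w).
  rewrite !app_assoc. repeat split; [exact Hd | |].
  - exact (cong_trans (cong_sym Hu2) (cong_appr w Hu)).
  - exact (cong_trans (cong_sym Hv2) (cong_appr w Hv)).
Qed.

Lemma cube_factors s r t v1 u1 v2 u2 v3 u3 :
  diagram R [s] [r] v1 u1 -> diagram R [r] [t] v2 u2 -> diagram R u1 v2 v3 u3 ->
  factors [s] [t] (u2 ++ u3) (v1 ++ v3).
Proof.
  intros H1 H2 H3. apply diagram_cons_factors, reverses_diagram.
  rewrite inv_cons, <- app_assoc. apply (cube (r := r)).
  apply diagram_reverses in H1, H2, H3.
  apply rt_trans with (pos v1 ++ inv u1 ++ inv [r] ++ pos [t]).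
  { rewrite app_assoc, (app_assoc (pos v1)). apply reverses_suffix, H1. }
  apply rt_trans with (pos v1 ++ inv u1 ++ pos v2 ++ inv u2).
  { apply reverses_prefix, reverses_prefix, H2. }
  rewrite pos_app, inv_app, <- app_assoc. apply reverses_prefix.
  rewrite !app_assoc. apply reverses_suffix, H3.
Qed.

Definition complete_at L := forall u v u' v',
  lam (u ++ v') = L -> cong R (u ++ v') (v ++ u') -> factors u v u' v'.

(* Induction along a rewriting derivation from [s x] to [t y]: a step at the
   first letter is a cell [r|t], glued to the factorization obtained so far by
   the cube condition; the lower level of the remaining words gives the rest. *)
Lemma complete_at_letters L : (forall L', ltW L' L -> complete_at L') ->
  forall s t x y, lam (s :: x) = L -> cong R (s :: x) (t :: y) -> factors [s] [t] y x.
Proof.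
  intros IH s t x y HL Hc.
  apply cong_rewriteE, clos_rt_rtn1 in Hc.
  remember (t :: y) as z eqn:Hz. revert t y Hz.
  induction Hc as [|z z' Hst Hc IHc]; intros t y Hz.
  - injection Hz as <- <-. exists [], [], x.
    repeat split; [apply diagram_cancel | apply cong_refl | apply cong_refl].
  - assert (Hcz : cong R (s :: x) z) by apply cong_rewriteE, clos_rtn1_rt, Hc.
    destruct z as [|r x'].
    { apply cong_sym, cong_nil in Hcz. discriminate. }
    destruct (IHc r x' eq_refl) as (v1&u1&w1&H1&Hx'&Hx).
    destruct Hst as (a&b&l&l'&Hu&Hz1&->).
    destruct a as [|c a]; simpl in Hz1, Hz.
    + destruct l as [|r0 l].
      { apply cong_urel, cong_nil in Hu. subst l'. simpl in Hz1, Hz. subst b.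
        injection Hz as <- <-. exists v1, u1, w1. auto. }
      destruct l' as [|t0 l'].
      { apply cong_urel, cong_sym, cong_nil in Hu. discriminate. }
      injection Hz1 as <- ->. injection Hz as <- <-.
      assert (Hlt : ltW (lam (u1 ++ w1)) L).
      { rewrite <- (lam_cong Hx'), <- HL, (lam_cong Hcz). apply lam_cons. }
      destruct (IH _ Hlt u1 l b w1 eq_refl (cong_sym Hx')) as (v3&u3&w3&H3&Hb&Hw1).
      apply factors_app_cong with (l' ++ u3) (v1 ++ v3) w3.
      * exact (cube_factors H1 (diagram_rel Hu) H3).
      * rewrite <- app_assoc. exact (cong_appl l' (cong_sym Hb)).
      * rewrite <- app_assoc. exact (cong_sym (cong_trans Hx (cong_appl v1 Hw1))).
    + injection Hz1 as <- ->. injection Hz as <- <-.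
      exists v1, u1, w1. repeat split; [exact H1 | | exact Hx].
      refine (cong_trans _ Hx'). apply cong_ctx, cong_urel, urel_sym, Hu.
Qed.

Lemma complete_at_of_below L : (forall L', ltW L' L -> complete_at L') -> complete_at L.
Proof.
  intros IH.
  enough (Hn : forall n u v u' v', length u + length v = n ->
            lam (u ++ v') = L -> cong R (u ++ v') (v ++ u') -> factors u v u' v')
    by (intros u v u' v'; eauto).
  intros n; induction n as [n IHn] using lt_wf_ind; intros u v u' v' Hlen HL Hc.
  destruct u as [|s u].
  { exists v, [], u'. repeat split; [apply diagram_nil_l | apply cong_refl | exact Hc]. }
  destruct v as [|t v].
  { exists [], (s :: u), v'.
    repeat split; [apply diagram_nil_r | apply cong_sym, Hc | apply cong_refl]. }
  destruct u as [|s0 u]; [destruct v as [|t0 v]|].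
  - exact (complete_at_letters IH HL Hc).
  - destruct (IHn 2 ltac:(simpl in Hlen; lia) [s] [t] (t0 :: v ++ u') v' eq_refl HL Hc)
      as (va&ua&wa&Ha&Hua&Hva).
    apply (factors_hcat (v1 := [t]) Ha Hva).
    assert (Hlt : ltW (lam (ua ++ wa)) L).
    { rewrite <- (lam_cong Hua), <- HL, (lam_cong Hc). apply lam_cons. }
    exact (IH _ Hlt ua (t0 :: v) u' wa eq_refl (cong_sym Hua)).
  - destruct (IHn (1 + length (t :: v)) ltac:(simpl in Hlen |- *; lia)
                [s] (t :: v) u' (s0 :: u ++ v') eq_refl HL Hc) as (va&ua&wa&Ha&Hua&Hva).
    apply (factors_vcat (u1 := [s]) Ha Hua).
    rewrite <- HL in IH.
    exact (IH _ (lam_cons s _) (s0 :: u) va wa v' eq_refl Hva).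
Qed.

Theorem r_complete_of_cube : r_complete R.
Proof.
  assert (Hall : forall L, complete_at L).
  { intros L. induction L as [L IH] using (well_founded_ind ltW_wf).
    exact (complete_at_of_below IH). }
  intros u v u' v' Hc.
  destruct (Hall _ u v u' v' eq_refl Hc) as (v''&u''&w&Hd&Hu&Hv).
  exists u'', v'', w. repeat split; [apply diagram_reverses, Hd | exact Hu | exact Hv].
Qed.

End Completeness.

Section WellOrder.
Variable I : Type.
Variable lt : I -> I -> Prop.
Hypothesis lt_wo : is_wellorder lt.

Lemma wo_total a b : lt a b \/ a = b \/ lt b a.
Proof. apply lt_wo. Qed.

Lemma wo_least (P : I -> Prop) : (exists x, P x) -> exists m, P m /\ forall y, P y -> ~ lt y m.
Proof.
  intros [x Hx]. destruct lt_wo as [Hwf _]. revert Hx.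
  induction (Hwf x) as [x _ IH]. intros Hx.
  destruct (classic (exists y, P y /\ lt y x)) as [[y [Hy Hyx]]|Hn]; [eauto|].
  exists x. split; [exact Hx|]. intros y Hy Hyx. apply Hn; eauto.
Qed.

Lemma wo_succ_exists i : (exists k, lt i k) -> exists m, is_succ lt i m.
Proof.
  intros H. destruct (wo_least (fun k => lt i k) H) as [m [Hm Hmin]].
  exists m. split; [exact Hm|]. intros k [H1 H2]. exact (Hmin k H1 H2).
Qed.

Lemma wo_succ_le i m k : is_succ lt i m -> lt i k -> m = k \/ lt m k.
Proof.
  intros [Him Hs] Hik. destruct (wo_total m k) as [H|[H|H]]; auto.
  exfalso. exact (Hs k (conj Hik H)).
Qed.

Lemma wo_cases i : (forall j, ~ lt j i) \/ (exists j, is_succ lt j i) \/ is_limit lt i.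
Proof.
  destruct (classic (exists j, lt j i)) as [H|H].
  - destruct (classic (exists j, is_succ lt j i)); [right; left | right; right; split]; auto.
  - left. intros j Hj. apply H; eauto.
Qed.

End WellOrder.

Section OneCompletion.
Variable S : Type.

Lemma one_completion_incl (R0 R1 : rels S) :
  one_completion R0 R1 -> forall x y, urel R0 x y -> urel R1 x y.
Proof.
  intros (s&t&r&u&v&Hsame&_&_) x y Hxy. apply Hsame.
  destruct Hxy; [left|right]; left; assumption.
Qed.

Lemma one_completion_cong (R0 R1 : rels S) :
  one_completion R0 R1 -> forall x y, cong R1 x y <-> cong R0 x y.
Proof.
  intros Hc x y. pose proof (one_completion_incl Hc) as Hincl.
  destruct Hc as (s&t&r&u&v&Hsame&Hrev&_). apply completion_rel_cong in Hrev.
  split; apply cong_min; intros a b Hab.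
  - assert (Hu : urel R1 a b) by (left; exact Hab). apply Hsame in Hu.
    destruct Hu as [[H|[-> ->]]|[H|[-> ->]]].
    + apply cong_rel, H.
    + exact Hrev.
    + apply cong_sym, cong_rel, H.
    + apply cong_sym, Hrev.
  - apply cong_urel, Hincl. left; exact Hab.
Qed.

Lemma one_completion_new_rel (R0 R1 : rels S) :
  one_completion R0 R1 -> exists p q, urel R1 p q /\ ~ urel R0 p q.
Proof.
  intros (s&t&r&u&v&Hsame&_&Hn). exists (s :: v), (t :: u). split.
  - apply Hsame. left. right. auto.
  - intros Hu. apply Hn.
    assert (Hd : diagram R0 (s :: v) (t :: u) [] []).
    { apply diagram_of_urel; try discriminate. rewrite !app_nil_r. exact Hu. }
    apply diagram_reverses in Hd. rewrite inv_cons, <- app_assoc in Hd. exact Hd.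
Qed.

Lemma cube_of_saturated (R : rels S) :
  (forall R', ~ one_completion R R') ->
  forall s r t u v,
    reverses R (inv [s] ++ pos [r] ++ inv [r] ++ pos [t]) (pos v ++ inv u) ->
    reverses R (inv v ++ inv [s] ++ pos [t] ++ pos u) [].
Proof.
  intros Hsat s r t u v Hrev. apply NNPP. intros Hn.
  apply (Hsat (fun x y => R x y \/ (x = s :: v /\ y = t :: u))).
  exists s, t, r, u, v. split; [intros x y; reflexivity | split; assumption].
Qed.

End OneCompletion.

Section CompletingSequence.
Variable S : Type.
Variable R : rels S.
Variable I : Type.
Variable lt : I -> I -> Prop.
Variable Rs : I -> rels S.
Hypothesis Hseq : r_completing_seq R lt Rs.

Lemma r_completing_seq_cong i x y : cong (Rs i) x y <-> cong R x y.
Proof.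
  destruct Hseq as [Hwo [Hmin [Hsucc Hlim]]]. pose proof Hwo as [Hwf _].
  revert x y. induction (Hwf i) as [i _ IH]. intros x y.
  destruct (wo_cases lt i) as [H|[[j Hj]|H]].
  - apply cong_same_rels, Hmin, H.
  - rewrite (one_completion_cong (Hsucc _ _ Hj)). apply IH, Hj.
  - split.
    + apply cong_min. intros a b Hab.
      destruct (proj1 (Hlim i H a b) (or_introl Hab)) as [j [Hj Hu]].
      apply (proj1 (IH j Hj a b)), cong_urel, Hu.
    + destruct H as [[j Hj] Hnsucc]. intros Hc. apply (IH j Hj) in Hc. revert Hc.
      apply cong_min. intros a b Hab. apply cong_urel, (Hlim i (conj (ex_intro _ j Hj) Hnsucc)).
      exists j. split; [exact Hj | left; exact Hab].
Qed.

Lemma r_completing_seq_incl i j x y : lt i j -> urel (Rs i) x y -> urel (Rs j) x y.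
Proof.
  destruct Hseq as [Hwo [_ [Hsucc Hlim]]]. pose proof Hwo as [Hwf _].
  revert i. induction (Hwf j) as [j _ IH]. intros i Hij Hxy.
  destruct (wo_cases lt j) as [H|[[k Hk]|H]].
  - exfalso. exact (H i Hij).
  - apply (one_completion_incl (Hsucc _ _ Hk)).
    destruct (wo_total Hwo i k) as [H|[<-|H]]; [exact (IH k (proj1 Hk) i H Hxy) | exact Hxy |].
    exfalso. exact (proj2 Hk i (conj H Hij)).
  - apply (Hlim j H). exists i; auto.
Qed.

Definition added_rel_spec i (o : option (word S * word S)) :=
  (o = None /\ forall k, ~ lt i k) \/
  (exists m p q, o = Some (p, q) /\ is_succ lt i m /\ urel (Rs m) p q /\ ~ urel (Rs i) p q).

Lemma added_rel_exists i : exists o, added_rel_spec i o.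
Proof.
  destruct Hseq as [Hwo [_ [Hsucc _]]].
  destruct (classic (exists k, lt i k)) as [H|H].
  - destruct (wo_succ_exists Hwo i H) as [m Hm].
    destruct (one_completion_new_rel (Hsucc _ _ Hm)) as (p&q&H1&H2).
    exists (Some (p, q)). right. exists m, p, q. auto.
  - exists None. left. split; [reflexivity|]. intros k Hk. apply H; eauto.
Qed.

Lemma added_rel_lt i i' o o' : lt i i' -> added_rel_spec i o -> added_rel_spec i' o' -> o <> o'.
Proof.
  intros Hii' [[_ Hmax]|(m&p&q&->&Hm&H1&H2)]; [exfalso; exact (Hmax _ Hii')|].
  assert (Hu : urel (Rs i') p q).
  { destruct (wo_succ_le (proj1 Hseq) _ Hm Hii') as [<-|H]; [exact H1|].
    exact (r_completing_seq_incl H H1). }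
  intros [[-> _]|(m'&p'&q'&->&_&_&H2')] Heq; [discriminate|].
  injection Heq as <- <-. exact (H2' Hu).
Qed.

Lemma r_completing_seq_inj :
  exists g : I -> option (word S * word S), forall a b, g a = g b -> a = b.
Proof.
  pose (g i := proj1_sig (constructive_indefinite_description _ (added_rel_exists i))).
  assert (Hg : forall i, added_rel_spec i (g i)) by (intros i; exact (proj2_sig _)).
  exists g. intros a b Hab.
  destruct (wo_total (proj1 Hseq) a b) as [H|[H|H]]; [| exact H |]; exfalso.
  - exact (added_rel_lt H (Hg a) (Hg b) Hab).
  - exact (added_rel_lt H (Hg b) (Hg a) (eq_sym Hab)).
Qed.

End CompletingSequence.

Section TopExtension.
Variable I : Type.
Variable lt : I -> I -> Prop.
Hypothesis lt_wo : is_wellorder lt.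

Definition top_lt (a b : option I) : Prop :=
  match a, b with
  | Some x, Some y => lt x y
  | Some _, None => True
  | None, _ => False
  end.

Lemma top_lt_wellorder : is_wellorder top_lt.
Proof.
  destruct lt_wo as [Hwf [Htrans Htot]].
  assert (Hacc : forall a, Acc top_lt (Some a)).
  { intros a. induction (Hwf a) as [a _ IH].
    constructor. intros [b|] Hb; [apply IH, Hb | contradiction]. }
  split; [|split].
  - intros [a|]; [apply Hacc|]. constructor. intros [b|] Hb; [apply Hacc | contradiction].
  - intros [a|] [b|] [c|]; simpl; intros; try contradiction; eauto.
  - intros [a|] [b|]; simpl; auto. destruct (Htot a b) as [H|[->|H]]; auto.
Qed.

Lemma top_lt_succ_some a b : is_succ top_lt (Some a) (Some b) -> is_succ lt a b.
Proof.
  intros [Hab Hs]. split; [exact Hab|]. intros k Hk. exact (Hs (Some k) Hk).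
Qed.

Lemma top_lt_succ_top a : is_succ top_lt (Some a) None -> forall b, ~ lt a b.
Proof. intros [_ Hs] b Hab. exact (Hs (Some b) (conj Hab Logic.I)). Qed.

Lemma top_lt_limit_some b : is_limit top_lt (Some b) -> is_limit lt b.
Proof.
  intros [[[c|] Hc] Hns]; [|destruct Hc]. split; [exists c; exact Hc|].
  intros [j Hj]. apply Hns. exists (Some j). split; [apply Hj|].
  intros [k|] [Hk1 Hk2]; [exact (proj2 Hj k (conj Hk1 Hk2)) | destruct Hk2].
Qed.

Lemma top_lt_limit_top :
  is_limit top_lt None -> (exists a : I, True) /\ forall a, exists b, lt a b.
Proof.
  intros [[[c|] Hc] Hns]; [|destruct Hc]. split; [exists c; exact Logic.I|].
  intros a. apply NNPP. intros Hmax. apply Hns. exists (Some a). split; [exact Logic.I|].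
  intros [k|] [Hk Hk']; [apply Hmax; exists k; exact Hk | destruct Hk'].
Qed.

End TopExtension.

Section Extension.
Variable S : Type.
Variable R : rels S.
Variable I : Type.
Variable lt : I -> I -> Prop.
Variable Rs : I -> rels S.
Hypothesis Hseq : r_completing_seq R lt Rs.

Definition add_top (Rtop : rels S) (a : option I) : rels S :=
  match a with Some x => Rs x | None => Rtop end.

Lemma add_top_completing_seq (Rtop : rels S) :
  ((I -> False) -> same_rels Rtop R) ->
  (forall a, (forall b, ~ lt a b) -> one_completion (Rs a) Rtop) ->
  (I -> (forall a, exists b, lt a b) ->
     forall x y, urel Rtop x y <-> exists a, urel (Rs a) x y) ->
  r_completing_seq R (top_lt lt) (add_top Rtop).
Proof.
  intros Hempty Hlast Hunion. destruct Hseq as [Hwo [Hmin [Hsucc Hlim]]].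
  split; [exact (top_lt_wellorder Hwo)|]. split; [|split].
  - intros [a|] H; simpl.
    + apply Hmin. intros j Hj. exact (H (Some j) Hj).
    + apply Hempty. intros a. exact (H (Some a) Logic.I).
  - intros [a|] [b|] Hs; simpl.
    + apply Hsucc, top_lt_succ_some, Hs.
    + apply Hlast, (top_lt_succ_top Hs).
    + destruct Hs as [[] _].
    + destruct Hs as [[] _].
  - intros [b|] Hl x y; simpl.
    + rewrite (Hlim b (top_lt_limit_some Hl)). split.
      * intros [j Hj]. exists (Some j). exact Hj.
      * intros [[j|] [Hj Hu]]; [exists j; auto | destruct Hj].
    + destruct (top_lt_limit_top Hl) as [[a _] Hnomax].
      rewrite (Hunion a Hnomax). split.
      * intros [j Hj]. exists (Some j). split; [exact Logic.I | exact Hj].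
      * intros [[j|] [Hj Hu]]; [exists j; exact Hu | destruct Hj].
Qed.

Lemma extendable_add_top (Rtop : rels S) :
  r_completing_seq R (top_lt lt) (add_top Rtop) -> extendable R lt Rs.
Proof.
  intros Hext. exists (option I), (top_lt lt), (add_top Rtop), Some.
  split; [exact Hext|]. split; [intros a b; reflexivity|]. split.
  - intros [j|] a Hj; [exists j; reflexivity | destruct Hj].
  - split; [exists None; intros a; discriminate|]. intros a x y. reflexivity.
Qed.

Lemma not_extendable_has_last : ~ extendable R lt Rs -> exists a, forall b, ~ lt a b.
Proof.
  intros Hne. apply NNPP. intros Hnolast. apply Hne.
  assert (Hnomax : forall a, exists b, lt a b).
  { intros a. apply NNPP. intros Ha. apply Hnolast. exists a. intros b Hb. apply Ha. eauto. }
  destruct (classic (exists a : I, True)) as [[a0 _]|Hempty].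
  - apply (@extendable_add_top (fun x y => exists a, urel (Rs a) x y)).
    apply add_top_completing_seq.
    + intros H. destruct (H a0).
    + intros a Ha. destruct (Hnomax a) as [b Hb]. destruct (Ha b Hb).
    + intros _ _ x y. split.
      * intros [H|[a Ha]]; [exact H | exists a; apply urel_sym, Ha].
      * intros H. left. exact H.
  - apply (@extendable_add_top R), add_top_completing_seq.
    + intros _ x y. reflexivity.
    + intros a. destruct Hempty. exists a. exact Logic.I.
    + intros a. destruct Hempty. exists a. exact Logic.I.
Qed.

Lemma not_extendable_last_saturated a :
  ~ extendable R lt Rs -> (forall b, ~ lt a b) -> forall R', ~ one_completion (Rs a) R'.
Proof.
  intros Hne Hlast R' HR'. apply Hne, (@extendable_add_top R'), add_top_completing_seq.
  - intros H. destruct (H a).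
  - intros a' Ha'. destruct (wo_total (proj1 Hseq) a a') as [H|[<-|H]].
    + destruct (Hlast _ H).
    + exact HR'.
    + destruct (Ha' _ H).
  - intros _ Hnomax. destruct (Hnomax a) as [b Hb]. destruct (Hlast b Hb).
Qed.

End Extension.

Definition chain_union (T : Type) (F : (T -> Prop) -> Prop) (t : T) : Prop :=
  exists2 X, F X & X t.

Lemma zorn_union (T : Type) (P : (T -> Prop) -> Prop) :
  (forall F : (T -> Prop) -> Prop, (forall X, F X -> P X) ->
     (forall X Y, F X -> F Y -> (forall t, X t -> Y t) \/ (forall t, Y t -> X t)) ->
     P (chain_union F)) ->
  exists A, P A /\ forall B, P B -> (forall t, A t -> B t) -> forall t, B t -> A t.
Proof.
  intros H. destruct (@classical_sets.Zorn_bigcup T P H) as [A [HA Hmax]].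
  exists A. split; [exact HA|]. intros B HB HAB t Bt. apply NNPP. intros HAt.
  apply (Hmax B); [split; [exact HAB|] | exact HB]. intros HBA. exact (HAt (HBA t Bt)).
Qed.

Definition inj_on (X Y : Type) (A : X -> Prop) (B : Y -> Prop) (f : X -> Y) : Prop :=
  (forall x, A x -> B (f x)) /\ (forall x x', A x -> A x' -> f x = f x' -> x = x').

Section Comparability.
Variables (X Y : Type) (x0 : X) (y0 : Y) (A : X -> Prop) (B : Y -> Prop).

Definition partial_inj (H : X * Y -> Prop) : Prop :=
  (forall x y, H (x, y) -> A x /\ B y) /\
  (forall x y y', H (x, y) -> H (x, y') -> y = y') /\
  (forall x x' y, H (x, y) -> H (x', y) -> x = x').

Lemma partial_inj_chain_union F : (forall H, F H -> partial_inj H) ->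
  (forall H H', F H -> F H' -> (forall t, H t -> H' t) \/ (forall t, H' t -> H t)) ->
  partial_inj (chain_union F).
Proof.
  intros HF Htot.
  assert (Hboth : forall t t', chain_union F t -> chain_union F t' ->
                    exists H, F H /\ H t /\ H t').
  { intros t t' [H1 F1 Ht] [H2 F2 Ht'].
    destruct (Htot H1 H2 F1 F2) as [Hs|Hs]; [exists H2 | exists H1]; auto. }
  split; [|split].
  - intros x y [H FH Hxy]. exact (proj1 (HF H FH) x y Hxy).
  - intros x y y' Hy Hy'. destruct (Hboth _ _ Hy Hy') as (H&FH&H1&H2).
    exact (proj1 (proj2 (HF H FH)) x y y' H1 H2).
  - intros x x' y Hx Hx'. destruct (Hboth _ _ Hx Hx') as (H&FH&H1&H2).
    exact (proj2 (proj2 (HF H FH)) x x' y H1 H2).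
Qed.

Lemma partial_inj_add H x1 y1 : partial_inj H -> A x1 -> B y1 ->
  (forall y, ~ H (x1, y)) -> (forall x, ~ H (x, y1)) ->
  partial_inj (fun t => H t \/ t = (x1, y1)).
Proof.
  intros [HAB [Hfun Hinj]] Hx1 Hy1 Hnx Hny. split; [|split].
  - intros x y [Hxy|Hxy]; [exact (HAB x y Hxy) | injection Hxy as -> ->; auto].
  - intros x y y' [H1|H1] [H2|H2].
    + exact (Hfun x y y' H1 H2).
    + injection H2 as -> ->. destruct (Hnx _ H1).
    + injection H1 as -> ->. destruct (Hnx _ H2).
    + congruence.
  - intros x x' y [H1|H1] [H2|H2].
    + exact (Hinj x x' y H1 H2).
    + injection H2 as -> ->. destruct (Hny _ H1).
    + injection H1 as -> ->. destruct (Hny _ H2).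
    + congruence.
Qed.

Lemma inj_on_comparable : (exists f, inj_on A B f) \/ (exists g, inj_on B A g).
Proof.
  destruct (@zorn_union _ partial_inj partial_inj_chain_union) as [H [[HAB [Hfun Hinj]] Hmax]].
  destruct (classic (forall x, A x -> exists y, H (x, y))) as [Htot|Hntot].
  - left. exists (fun x => epsilon (inhabits y0) (fun y => H (x, y))).
    assert (Hf : forall x, A x -> H (x, epsilon (inhabits y0) (fun y => H (x, y))))
      by (intros x Hx; apply epsilon_spec, Htot, Hx).
    split.
    + intros x Hx. exact (proj2 (HAB _ _ (Hf x Hx))).
    + intros x x' Hx Hx' Heq. apply (Hinj x x' _ (Hf x Hx)). rewrite Heq. exact (Hf x' Hx').
  - apply not_all_ex_not in Hntot as [x1 Hx1]. apply imply_to_and in Hx1 as [Hx1 Hnx].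
    destruct (classic (forall y, B y -> exists x, H (x, y))) as [Hsurj|Hnsurj].
    + right. exists (fun y => epsilon (inhabits x0) (fun x => H (x, y))).
      assert (Hg : forall y, B y -> H (epsilon (inhabits x0) (fun x => H (x, y)), y))
        by (intros y Hy; apply epsilon_spec, Hsurj, Hy).
      split.
      * intros y Hy. exact (proj1 (HAB _ _ (Hg y Hy))).
      * intros y y' Hy Hy' Heq. apply (Hfun _ y y' (Hg y Hy)). rewrite Heq. exact (Hg y' Hy').
    + exfalso. apply not_all_ex_not in Hnsurj as [y1 Hy1]. apply imply_to_and in Hy1 as [Hy1 Hny].
      assert (Hnew : partial_inj (fun t => H t \/ t = (x1, y1))).
      { apply partial_inj_add; [split; [|split] | | | |]; eauto. }
      apply Hnx. exists y1. exact (Hmax _ Hnew (fun t Ht => or_introl Ht) _ (or_intror eq_refl)).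
Qed.

End Comparability.

Section InfinitePairing.
Variable S : Type.
Variable e : nat -> S.
Hypothesis e_inj : forall m n, e m = e n -> m = n.

(* A set [X] of elements of [S + S * S * S] encodes the subset [dom X] of [S]
   together with the graph [graph X] of a binary operation on it. *)
Definition dom (X : S + S * S * S -> Prop) (x : S) : Prop := X (inl x).
Definition graph (X : S + S * S * S -> Prop) (x y z : S) : Prop := X (inr (x, y, z)).

Definition is_pairing (X : S + S * S * S -> Prop) : Prop :=
  (forall x y z, graph X x y z -> dom X x /\ dom X y /\ dom X z) /\
  (forall x y, dom X x -> dom X y -> exists z, graph X x y z) /\
  (forall x y z z', graph X x y z -> graph X x y z' -> z = z') /\
  (forall x y x' y' z, graph X x y z -> graph X x' y' z -> x = x' /\ y = y').

Lemma is_pairing_ext X Y : (forall t, X t <-> Y t) -> is_pairing X -> is_pairing Y.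
Proof.
  intros H [Hdom [Htot [Hfun Hinj]]]. unfold is_pairing, dom, graph in *.
  split; [|split; [|split]].
  - intros x y z Hg. apply H in Hg. rewrite <- !H. exact (Hdom _ _ _ Hg).
  - intros x y Hx Hy. apply H in Hx, Hy. destruct (Htot _ _ Hx Hy) as [z Hz].
    exists z. apply H, Hz.
  - intros x y z z' H1 H2. apply H in H1, H2. eauto.
  - intros x y x' y' z H1 H2. apply H in H1, H2. eauto.
Qed.

Definition nat_pairing (t : S + S * S * S) : Prop :=
  match t with
  | inl x => exists n, x = e n
  | inr (x, y, z) => exists m n, x = e m /\ y = e n /\ z = e (Cantor.to_nat (m, n))
  end.

Lemma nat_pairing_is_pairing : is_pairing nat_pairing.
Proof.
  unfold is_pairing, dom, graph, nat_pairing. split; [|split; [|split]].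
  - intros x y z (m&n&->&->&->). eauto 6.
  - intros x y [m ->] [n ->]. eauto 6.
  - intros x y z z' (m&n&->&->&->) (m'&n'&H1&H2&->).
    apply e_inj in H1, H2. subst. reflexivity.
  - intros x y x' y' z (m&n&->&->&->) (m'&n'&->&->&H).
    apply e_inj, Cantor.to_nat_inj in H. injection H as -> ->. auto.
Qed.

(* Zorn's lemma is applied to the sets [X] with [nat_pairing ∪ X] a pairing,
   a family which, unlike the pairings containing [nat_pairing], contains the
   union of the empty chain. *)
Definition extends_nat_pairing X := is_pairing (fun t => nat_pairing t \/ X t).

Lemma extends_nat_pairing_chain_union F : (forall X, F X -> extends_nat_pairing X) ->
  (forall X Y, F X -> F Y -> (forall t, X t -> Y t) \/ (forall t, Y t -> X t)) ->
  extends_nat_pairing (chain_union F).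
Proof.
  intros HF Htot.
  set (U := fun t => nat_pairing t \/ chain_union F t).
  assert (Hboth : forall t1 t2, U t1 -> U t2 ->
            exists Y, is_pairing Y /\ (forall t, Y t -> U t) /\ Y t1 /\ Y t2).
  { assert (Hmember : forall X, F X -> forall t1 t2,
              nat_pairing t1 \/ X t1 -> nat_pairing t2 \/ X t2 ->
              exists Y, is_pairing Y /\ (forall t, Y t -> U t) /\ Y t1 /\ Y t2).
    { intros X HX t1 t2 H1 H2. exists (fun t => nat_pairing t \/ X t).
      split; [exact (HF X HX)|]. split; [|auto].
      intros t [Ht|Ht]; [left; exact Ht | right; exists X; assumption]. }
    intros t1 t2 [H1|[X1 HX1 H1]] [H2|[X2 HX2 H2]].
    - exists nat_pairing. split; [exact nat_pairing_is_pairing|]. split; auto.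
      intros t Ht. left. exact Ht.
    - apply (Hmember X2 HX2); [left | right]; assumption.
    - apply (Hmember X1 HX1); [right | left]; assumption.
    - destruct (Htot X1 X2 HX1 HX2) as [Hs|Hs].
      + apply (Hmember X2 HX2); right; auto.
      + apply (Hmember X1 HX1); right; auto. }
  unfold extends_nat_pairing, is_pairing, dom, graph. split; [|split; [|split]].
  - intros x y z Hg. destruct (Hboth _ _ Hg Hg) as (Y&[Hdom _]&HYU&HY&_).
    destruct (Hdom _ _ _ HY) as (Hx&Hy&Hz). repeat split; apply HYU; assumption.
  - intros x y Hx Hy. destruct (Hboth _ _ Hx Hy) as (Y&[_ [Htot' _]]&HYU&HYx&HYy).
    destruct (Htot' _ _ HYx HYy) as [z Hz]. exists z. apply HYU, Hz.
  - intros x y z z' H1 H2. destruct (Hboth _ _ H1 H2) as (Y&[_ [_ [Hfun _]]]&_&HY1&HY2). eauto.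
  - intros x y x' y' z H1 H2. destruct (Hboth _ _ H1 H2) as (Y&[_ [_ [_ Hinj]]]&_&HY1&HY2). eauto.
Qed.

Section Maximal.
Variable A0 : S + S * S * S -> Prop.
Hypothesis A0_ext : extends_nat_pairing A0.
Hypothesis A0_max :
  forall B, extends_nat_pairing B -> (forall t, A0 t -> B t) -> forall t, B t -> A0 t.

Definition M (t : S + S * S * S) : Prop := nat_pairing t \/ A0 t.

Lemma M_maximal B : is_pairing B -> (forall t, M t -> B t) -> forall t, B t -> M t.
Proof.
  intros HB HMB t Bt. right.
  apply (A0_max (B := B)); [| intros t' Ht'; apply HMB; right; exact Ht' | exact Bt].
  apply (is_pairing_ext (X := B)); [|exact HB].
  intros t'. split; [intros H; right; exact H | intros [H|H]; [apply HMB; left|]; exact H].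
Qed.

Lemma dom_M_e k : dom M (e k).
Proof. left. exists k. reflexivity. Qed.

Lemma graph_M_dom x y z : graph M x y z -> dom M x /\ dom M y /\ dom M z.
Proof. apply A0_ext. Qed.

Lemma graph_M_total x y : dom M x -> dom M y -> exists z, graph M x y z.
Proof. apply A0_ext. Qed.

Lemma graph_M_fun x y z z' : graph M x y z -> graph M x y z' -> z = z'.
Proof. apply A0_ext. Qed.

Lemma graph_M_inj x y x' y' z : graph M x y z -> graph M x' y' z -> x = x' /\ y = y'.
Proof. apply A0_ext. Qed.

Section Doubling.
Variable j : S -> S.
Hypothesis j_inj_on : inj_on (dom M) (fun x => ~ dom M x) j.

Lemma j_out a : dom M a -> ~ dom M (j a).
Proof. apply j_inj_on. Qed.

Lemma j_inj a b : dom M a -> dom M b -> j a = j b -> a = b.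
Proof. apply j_inj_on. Qed.

(* A pair of [dom M ∪ j(dom M)] not contained in [dom M] is
   [(tag_l k a, tag_r k b)] for a unique kind [k <= 2] and [a, b] in [dom M];
   it is sent to [j (G (G a b) (e k))], where [G] is the operation of [M]. *)
Definition tag_l (k : nat) (a : S) : S := match k with 0 => a | _ => j a end.
Definition tag_r (k : nat) (b : S) : S := match k with 1 => b | _ => j b end.

Definition doubled_graph (x y z : S) : Prop :=
  exists k a b c d, k <= 2 /\ dom M a /\ dom M b /\ x = tag_l k a /\ y = tag_r k b /\
    graph M a b c /\ graph M c (e k) d /\ z = j d.

Definition doubled (t : S + S * S * S) : Prop :=
  M t \/ match t with
         | inl x => exists a, dom M a /\ x = j a
         | inr (x, y, z) => doubled_graph x y z
         end.

Lemma tag_l_dom k a : dom M a -> (dom M (tag_l k a) <-> k = 0).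
Proof.
  intros Ha. destruct k; simpl; split; intros H; auto; try discriminate.
  destruct (j_out Ha H).
Qed.

Lemma tag_r_dom k b : dom M b -> (dom M (tag_r k b) <-> k = 1).
Proof.
  intros Hb. destruct k as [|[|k]]; simpl; split; intros H; auto; try discriminate;
    destruct (j_out Hb H).
Qed.

Lemma tag_l_inj k a a' : dom M a -> dom M a' -> tag_l k a = tag_l k a' -> a = a'.
Proof. destruct k; simpl; [auto | apply j_inj]. Qed.

Lemma tag_r_inj k b b' : dom M b -> dom M b' -> tag_r k b = tag_r k b' -> b = b'.
Proof. destruct k as [|[|k]]; simpl; [apply j_inj | auto | apply j_inj]. Qed.

Lemma tag_kind_inj k k' a b a' b' : dom M a -> dom M b -> dom M a' -> dom M b' ->
  k <= 2 -> k' <= 2 -> tag_l k a = tag_l k' a' -> tag_r k b = tag_r k' b' -> k = k'.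
Proof.
  intros Ha Hb Ha' Hb' Hk Hk' Hl Hr.
  pose proof (tag_l_dom k Ha) as E1. pose proof (tag_l_dom k' Ha') as E2.
  pose proof (tag_r_dom k Hb) as E3. pose proof (tag_r_dom k' Hb') as E4.
  rewrite Hl in E1. rewrite Hr in E3.
  assert (k = 0 <-> k' = 0) by (rewrite <- E1, <- E2; reflexivity).
  assert (k = 1 <-> k' = 1) by (rewrite <- E3, <- E4; reflexivity).
  lia.
Qed.

Lemma doubled_graph_out x y z : doubled_graph x y z -> ~ dom M z.
Proof.
  intros (k&a&b&c&d&_&_&_&_&_&_&Hcd&->). exact (j_out (proj2 (proj2 (graph_M_dom Hcd)))).
Qed.

Lemma doubled_graph_not_M x y z z' : doubled_graph x y z -> ~ graph M x y z'.
Proof.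
  intros (k&a&b&c&d&_&Ha&Hb&->&->&_) HM. destruct (graph_M_dom HM) as (Hx&Hy&_).
  apply (tag_l_dom k Ha) in Hx. apply (tag_r_dom k Hb) in Hy. congruence.
Qed.

Lemma doubled_is_pairing : is_pairing doubled.
Proof.
  unfold is_pairing, dom, graph, doubled. fold (dom M) (graph M).
  split; [|split; [|split]].
  - intros x y z [Hg|(k&a&b&c&d&Hk&Ha&Hb&->&->&Hab&Hcd&->)].
    + destruct (graph_M_dom Hg) as (?&?&?). auto.
    + destruct (graph_M_dom Hcd) as (_&_&Hd). split; [|split]; [| |right; eauto].
      * destruct k; simpl; [left; exact Ha | right; eauto].
      * destruct k as [|[|k]]; simpl; [right; eauto | left; exact Hb | right; eauto].
  - assert (Hnew : forall k a b, dom M a -> dom M b -> k <= 2 ->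
                     exists z, doubled_graph (tag_l k a) (tag_r k b) z).
    { intros k a b Ha Hb Hk. destruct (graph_M_total Ha Hb) as [c Hc].
      destruct (graph_M_total (proj2 (proj2 (graph_M_dom Hc))) (dom_M_e k)) as [d Hd].
      exists (j d), k, a, b, c, d. repeat split; assumption. }
    intros x y [Hx|(a&Ha&->)] [Hy|(b&Hb&->)].
    + destruct (graph_M_total Hx Hy) as [z Hz]. exists z. left. exact Hz.
    + destruct (Hnew 0 x b Hx Hb ltac:(lia)) as [z Hz]. exists z. right. exact Hz.
    + destruct (Hnew 1 a y Ha Hy ltac:(lia)) as [z Hz]. exists z. right. exact Hz.
    + destruct (Hnew 2 a b Ha Hb ltac:(lia)) as [z Hz]. exists z. right. exact Hz.
  - intros x y z z' [H1|H1] [H2|H2].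
    + exact (graph_M_fun H1 H2).
    + destruct (doubled_graph_not_M H2 H1).
    + destruct (doubled_graph_not_M H1 H2).
    + destruct H1 as (k&a&b&c&d&Hk&Ha&Hb&Hx&Hy&Hab&Hcd&->).
      destruct H2 as (k'&a'&b'&c'&d'&Hk'&Ha'&Hb'&Hx'&Hy'&Hab'&Hcd'&->).
      assert (k' = k) as ->
        by (symmetry; apply (tag_kind_inj Ha Hb Ha' Hb' Hk Hk'); congruence).
      rewrite Hx in Hx'. rewrite Hy in Hy'.
      apply tag_l_inj in Hx'; [|assumption..]. apply tag_r_inj in Hy'; [|assumption..].
      subst a' b'. rewrite (graph_M_fun Hab Hab') in Hcd.
      rewrite (graph_M_fun Hcd Hcd'). reflexivity.
  - intros x y x' y' z [H1|H1] [H2|H2].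
    + exact (graph_M_inj H1 H2).
    + destruct (doubled_graph_out H2 (proj2 (proj2 (graph_M_dom H1)))).
    + destruct (doubled_graph_out H1 (proj2 (proj2 (graph_M_dom H2)))).
    + destruct H1 as (k&a&b&c&d&Hk&Ha&Hb&->&->&Hab&Hcd&Hz).
      destruct H2 as (k'&a'&b'&c'&d'&Hk'&Ha'&Hb'&->&->&Hab'&Hcd'&Hz').
      rewrite Hz in Hz'. apply j_inj in Hz';
        [|exact (proj2 (proj2 (graph_M_dom Hcd))) | exact (proj2 (proj2 (graph_M_dom Hcd')))].
      subst d'. destruct (graph_M_inj Hcd Hcd') as [-> He]. apply e_inj in He. subst k'.
      destruct (graph_M_inj Hab Hab') as [-> ->]. auto.
Qed.

Lemma doubling_absurd : False.
Proof.
  assert (H : doubled (inl (j (e 0))))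
    by (right; exists (e 0); split; [apply dom_M_e | reflexivity]).
  apply (M_maximal doubled_is_pairing) in H; [|intros t Ht; left; exact Ht].
  exact (j_out (dom_M_e 0) H).
Qed.

End Doubling.

Lemma compl_inj_on_dom : exists h, inj_on (fun x => ~ dom M x) (dom M) h.
Proof.
  destruct (inj_on_comparable (e 0) (e 0) (fun x => ~ dom M x) (dom M)) as [Hh|[j Hj]];
    [exact Hh | destruct (doubling_absurd Hj)].
Qed.

Definition op (x y : S) : S := epsilon (inhabits (e 0)) (graph M x y).

Lemma graph_M_op x y : dom M x -> dom M y -> graph M x y (op x y).
Proof. intros Hx Hy. unfold op. apply epsilon_spec, graph_M_total; assumption. Qed.

Lemma maximal_pairing : exists pr : S -> S -> S,
  forall x y x' y', pr x y = pr x' y' -> x = x' /\ y = y'.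
Proof.
  destruct compl_inj_on_dom as (h&Hh_dom&Hh_inj).
  (* [p] embeds [S] into [dom M] by sending [dom M] and its complement to the
     disjoint sets [G (dom M, e 0)] and [G (dom M, e 1)]. *)
  pose (p x := if excluded_middle_informative (dom M x) then op x (e 0) else op (h x) (e 1)).
  assert (Hp : forall x, exists a k, dom M a /\ graph M a (e k) (p x) /\
                 (dom M x -> a = x /\ k = 0) /\ (~ dom M x -> a = h x /\ k = 1)).
  { intros x. unfold p. destruct (excluded_middle_informative (dom M x)) as [Hx|Hx].
    - exists x, 0. split; [exact Hx|]. split; [exact (graph_M_op Hx (dom_M_e 0))|].
      split; [auto | intros Hn; contradiction].
    - exists (h x), 1. split; [exact (Hh_dom x Hx)|].
      split; [exact (graph_M_op (Hh_dom x Hx) (dom_M_e 1))|].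
      split; [intros Hn; contradiction | auto]. }
  assert (Hp_dom : forall x, dom M (p x)).
  { intros x. destruct (Hp x) as (a&k&_&Hg&_). exact (proj2 (proj2 (graph_M_dom Hg))). }
  assert (Hp_inj : forall x x', p x = p x' -> x = x').
  { intros x x' Heq. destruct (Hp x) as (a&k&_&Hg&Hin&Hout).
    destruct (Hp x') as (a'&k'&_&Hg'&Hin'&Hout'). rewrite Heq in Hg.
    destruct (graph_M_inj Hg Hg') as [<- Hk]. apply e_inj in Hk. subst k'.
    destruct (classic (dom M x)) as [Hx|Hx]; destruct (classic (dom M x')) as [Hx'|Hx'].
    - rewrite <- (proj1 (Hin Hx)). exact (proj1 (Hin' Hx')).
    - destruct (Hin Hx) as [_ ->]. destruct (Hout' Hx') as [_ H]. discriminate.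
    - destruct (Hout Hx) as [_ ->]. destruct (Hin' Hx') as [_ H]. discriminate.
    - destruct (Hout Hx) as [-> _]. destruct (Hout' Hx') as [H _]. exact (Hh_inj _ _ Hx Hx' H). }
  exists (fun x y => op (p x) (p y)). intros x y x' y' Heq.
  pose proof (graph_M_op (Hp_dom x) (Hp_dom y)) as H1. rewrite Heq in H1.
  destruct (graph_M_inj H1 (graph_M_op (Hp_dom x') (Hp_dom y'))) as [Hx Hy].
  split; apply Hp_inj; assumption.
Qed.

End Maximal.

Lemma infinite_pairing : exists pr : S -> S -> S,
  forall x y x' y', pr x y = pr x' y' -> x = x' /\ y = y'.
Proof.
  destruct (@zorn_union _ extends_nat_pairing extends_nat_pairing_chain_union) as [A0 [HA0 Hmax]].
  exact (maximal_pairing HA0 Hmax).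
Qed.

End InfinitePairing.

Section WordCount.
Variable S : Type.
Variable s0 : S.

Lemma nat_inj_or_inj_nat :
  (exists e : nat -> S, forall m n, e m = e n -> m = n) \/
  (exists c : S -> nat, forall x y, c x = c y -> x = y).
Proof.
  destruct (inj_on_comparable 0 s0 (fun _ => True) (fun _ => True)) as [[e [_ He]]|[c [_ Hc]]];
    [left; exists e | right; exists c]; auto.
Qed.

Fixpoint list_code (c : S -> nat) (l : list S) : nat :=
  match l with [] => 0 | x :: l => Datatypes.S (Cantor.to_nat (c x, list_code c l)) end.

Lemma list_code_inj c : (forall x y, c x = c y -> x = y) ->
  forall l l', list_code c l = list_code c l' -> l = l'.
Proof.
  intros Hc l; induction l as [|x l IH]; intros [|y l'] H; cbn [list_code] in H;
    try discriminate; [reflexivity|].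
  apply Nat.succ_inj, Cantor.to_nat_inj in H. injection H as H1 H2.
  rewrite (Hc _ _ H1), (IH _ H2). reflexivity.
Qed.

Fixpoint list_fold_pr (pr : S -> S -> S) (z : S) (l : list S) : S :=
  match l with [] => z | x :: l => pr x (list_fold_pr pr z l) end.

Lemma list_fold_pr_inj pr z : (forall x y x' y', pr x y = pr x' y' -> x = x' /\ y = y') ->
  forall l l', length l = length l' -> list_fold_pr pr z l = list_fold_pr pr z l' -> l = l'.
Proof.
  intros Hpr l; induction l as [|x l IH]; intros [|y l'] Hl H; simpl in *; try discriminate; auto.
  apply Hpr in H as [-> H]. rewrite (IH l'); [reflexivity | lia | exact H].
Qed.

Lemma word_pairs_inj :
  exists f : option (word S * word S) -> S + nat, forall a b, f a = f b -> a = b.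
Proof.
  destruct nat_inj_or_inj_nat as [[e He]|[c Hc]].
  - destruct (infinite_pairing _ He) as [pr Hpr].
    pose (code l := pr (e (length l)) (list_fold_pr pr (e 0) l)).
    assert (Hcode : forall l l', code l = code l' -> l = l').
    { intros l l' H. apply Hpr in H as [H1 H2]. apply He in H1.
      exact (list_fold_pr_inj _ _ Hpr _ _ H1 H2). }
    exists (fun o => match o with None => inr 0 | Some (v, u) => inl (pr (code v) (code u)) end).
    intros [[v u]|] [[v' u']|] H; try discriminate; [|reflexivity].
    injection H as H. apply Hpr in H as [H1 H2].
    rewrite (Hcode _ _ H1), (Hcode _ _ H2). reflexivity.
  - exists (fun o => match o with
               | None => inr 0
               | Some (v, u) => inr (Datatypes.S (Cantor.to_nat (list_code c v, list_code c u)))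
               end).
    intros [[v u]|] [[v' u']|] H; try discriminate; [|reflexivity].
    assert (Hnat : Cantor.to_nat (list_code c v, list_code c u)
                   = Cantor.to_nat (list_code c v', list_code c u')) by congruence.
    apply Cantor.to_nat_inj in Hnat. injection Hnat as H1 H2.
    rewrite (list_code_inj _ Hc _ _ H1), (list_code_inj _ Hc _ _ H2). reflexivity.
Qed.

End WordCount.

Theorem proposition5p3 (S : Type) (R : rels S)
  (hS : inhabited S) (hpos : positive R) (hhom : homogeneous R) :
  (* length < sup(kappa^+, aleph_1), i.e. |length| <= max(|S|, aleph_0) *)
  (forall (I : Type) (lt : I -> I -> Prop) (Rs : I -> rels S),
     r_completing_seq R lt Rs ->
     exists f : I -> S + nat, forall a b, f a = f b -> a = b) /\
  (* every presentation in the sequence defines the same congruence *)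
  (forall (I : Type) (lt : I -> I -> Prop) (Rs : I -> rels S),
     r_completing_seq R lt Rs ->
     forall i x y, cong (Rs i) x y <-> cong R x y) /\
  (* non-extendable sequences end with an r-complete equivalent presentation *)
  (forall (I : Type) (lt : I -> I -> Prop) (Rs : I -> rels S),
     r_completing_seq R lt Rs -> ~ extendable R lt Rs ->
     exists i, (forall j, ~ lt i j) /\ r_complete (Rs i) /\
       (forall x y, cong (Rs i) x y <-> cong R x y)).
Proof.
  destruct hS as [s0].
  destruct hhom as (W & ltW & lam & _ & [HWwf [HWtrans _]] & Hlam & _ & Hlam_cons & _).
  split; [|split].
  - intros I lt Rs Hseq.
    destruct (r_completing_seq_inj Hseq) as [g Hg]. destruct (word_pairs_inj s0) as [c Hc].
    exists (fun i => c (g i)). auto.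
  - intros I lt Rs Hseq. exact (r_completing_seq_cong Hseq).
  - intros I lt Rs Hseq Hne.
    destruct (not_extendable_has_last Hseq Hne) as [i Hlast].
    exists i. split; [exact Hlast|]. split; [|exact (r_completing_seq_cong Hseq i)].
    apply (r_complete_of_cube (ltW := ltW) lam HWwf HWtrans).
    + intros u v Huv. apply Hlam, (proj1 (r_completing_seq_cong Hseq i u v)), Huv.
    + exact Hlam_cons.
    + exact (cube_of_saturated (not_extendable_last_saturated Hseq _ Hne Hlast)).
Qed.
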